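(* Let $\Omega\subseteq\mathbb R^3$ be a nonempty open set, $V\in\Omega$ and $k\ge0$. Then $$\{\kappa_{\vec x-V}(\mathbf q_1):\mathbf q_1\in[\Pi^k(\Omega)]^3\}=\{\kappa_{\vec x-V}(\mathbf q_2):\mathbf q_2\in[\Pi^k(\Omega)]^3,\ \operatorname{div}\mathbf q_2=0\}.$$
   Context: $\Pi^k(\Omega)$ denotes the space of polynomials of total degree at most $k$ in $\vec x=(x,y,z)$, restricted to $\Omega$. For $V\in\mathbb R^3$ the Koszul operator is $\kappa_{\vec x-V}(\mathbf a):=(\vec x-V)\times\mathbf a$ for vector fields $\mathbf a$. *)

From HB Require Import structures.
From mathcomp Require Import all_boot all_order all_algebra.
From mathcomp Require Import reals.
From mathcomp Require Import mpoly.
Set Implicit Arguments. Unset Strict Implicit. Unset Printing Implicit Defensive.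
Import Order.TTheory GRing.Theory Num.Theory.
Local Open Scope ring_scope.

Definition poly3 (R : realType) := mpoly.mpoly 3 R.

(* p has total degree at most k  (msize p = 1 + deg p, and 0 for p = 0) *)
Definition deg_le (R : realType) (k : nat) (p : poly3 R) : bool :=
  (mpoly.msize p <= k.+1)%N.

Definition peval (R : realType) (p : poly3 R) (x : 'rV[R]_3) : R :=
  mpoly.meval (fun i : 'I_3 => x ord0 i) p.

Definition vpeval (R : realType) (q : 'I_3 -> poly3 R) (x : 'rV[R]_3) : 'rV[R]_3 :=
  \row_i peval (q i) x.

Definition polydiv3 (R : realType) (q : 'I_3 -> poly3 R) : poly3 R :=
  \sum_(i < 3) mpoly.mderiv i (q i).

Definition cross (R : realType) (u v : 'rV[R]_3) : 'rV[R]_3 :=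
  let c (w : 'rV[R]_3) (j : nat) := w ord0 (inord j) in
  \row_(i < 3)
    (if (i : nat) == 0%N then c u 1 * c v 2 - c u 2 * c v 1
     else if (i : nat) == 1%N then c u 2 * c v 0 - c u 0 * c v 2
     else c u 0 * c v 1 - c u 1 * c v 0).

Definition koszul (R : realType) (V : 'rV[R]_3) (a : 'rV[R]_3 -> 'rV[R]_3)
  : 'rV[R]_3 -> 'rV[R]_3 :=
  fun x => cross (x - V) (a x).

(* Since (x - V) x ((x - V) g) = 0, replacing q by q + (x - V) g does not change
   the Koszul image, so it suffices to find g in Pi^(k-1) with
   div ((x - V) g) = - div q.  On a monomial of degree d the operator
   g |-> div ((x - V) g) = 3 g + (x - V) . grad g acts as (3 + d) plus terms of
   lower degree, hence it maps Pi^(k-1) onto Pi^(k-1). *)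
From HB Require Import structures.
From mathcomp Require Import all_boot all_order all_algebra.
From mathcomp Require Import reals mpoly.
From mathcomp Require Import zify ring.
Set Implicit Arguments. Unset Strict Implicit. Unset Printing Implicit Defensive.
Import Order.TTheory GRing.Theory Num.Theory.
Local Open Scope ring_scope.

Section RadialDivergence.
Variables (R : numFieldType) (n : nat).
Local Notation P := {mpoly R[n]}.

Lemma msize_mderiv (p : P) i : (msize p^`M(i) <= (msize p).-1)%N.
Proof.
rewrite msizeE; apply/bigmax_leqP_seq => m; rewrite mcoeff_msupp mcoeff_deriv.
have [->|nz] := eqVneq p@_(m + U_(i)) 0; first by rewrite mul0rn eqxx.
move=> _ _; have /msize_mdeg_lt : (m + U_(i))%MM \in msupp p by rewrite mcoeff_msupp.
by rewrite mdegD mdeg1 addn1; case: (msize p).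
Qed.

Definition mdiv (q : 'I_n -> P) : P := \sum_(i < n) (q i)^`M(i).

Lemma msize_mdiv (q : 'I_n -> P) k :
  (forall i, msize (q i) <= k.+1)%N -> (msize (mdiv q) <= k)%N.
Proof.
move=> qk; apply: leq_trans (msize_sum _ _ _) _; apply/bigmax_leqP_seq => i _ _.
by apply: leq_trans (msize_mderiv _ _) _; rewrite -ltnS -ltnS; case: (msize _) (qk i).
Qed.

Variable V : 'I_n -> R.

Definition radial (g : P) (i : 'I_n) : P := ('X_i - (V i)%:MP) * g.

Definition radial_div (g : P) : P := mdiv (radial g).

Lemma msize_radial (g : P) i : (msize (radial g i) <= (msize g).+1)%N.
Proof.
have [->|g_nz] := eqVneq g 0; first by rewrite /radial mulr0 msize0.
have [X0|X_nz] := eqVneq ('X_i - (V i)%:MP : P) 0; first by rewrite /radial X0 mul0r msize0.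
have X_le2 : (msize ('X_i - (V i)%:MP : P) <= 2)%N.
  apply: leq_trans (msizeD_le _ _) _; rewrite geq_max msizeX mdeg1 msizeN msizeC.
  by case: (V i != 0).
rewrite /radial msizeM //; move: X_le2.
by move: (msize _) (msize g) => a b; lia.
Qed.

Lemma mdiv_add_radial (q : 'I_n -> P) g :
  mdiv (fun i => q i + radial g i) = mdiv q + radial_div g.
Proof. by rewrite /radial_div /mdiv -big_split; apply: eq_bigr => i _; rewrite mderivD. Qed.

Lemma radial_divD : {morph radial_div : g h / g + h}.
Proof.
move=> g h; rewrite /radial_div /mdiv -big_split; apply: eq_bigr => i _ /=.
by rewrite /radial mulrDr mderivD.
Qed.

Lemma radial_divZ a g : radial_div (a *: g) = a *: radial_div g.
Proof.
rewrite /radial_div /mdiv scaler_sumr; apply: eq_bigr => i _.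
by rewrite /radial -scalerAr mderivZ.
Qed.

Lemma radial_div0 : radial_div 0 = 0.
Proof. by rewrite /radial_div /mdiv big1 // => i _; rewrite /radial mulr0 mderiv0. Qed.

Lemma radial_divX m : radial_div 'X_[m] =
  (n + mdeg m)%:R *: 'X_[m] - \sum_(i < n) V i *: ('X_[m] : P)^`M(i).
Proof.
have XmderivX i : 'X_i * ('X_[m] : P)^`M(i) = (m i)%:R *: 'X_[m].
  rewrite mderivX -scalerAr; have [->|mi_nz] := eqVneq (m i) 0%N; first by rewrite !scale0r.
  by rewrite -mpolyXD addmC submK // lep1mP.
have term i : (radial 'X_[m] i)^`M(i) = (1 + m i)%:R *: 'X_[m] - V i *: ('X_[m] : P)^`M(i).
  rewrite /radial mderivM mderivB mderivX mderivC mnm1E eqxx subr0.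
  rewrite -{1}[U_(i)%MM]add0m addmK mpolyX0.
  by rewrite scale1r mul1r mulrBl XmderivX mul_mpolyC natrD scalerDl scale1r addrA.
rewrite /radial_div /mdiv (eq_bigr _ (fun i _ => term i)) sumrB -scaler_suml.
by rewrite -natr_sum big_split /= sum1_card card_ord -mdegE.
Qed.

Lemma radial_div_onto_of_monomials k :
  (forall m, mdeg m < k -> exists2 g, msize g <= k & radial_div g = 'X_[m])%N ->
  forall h, (msize h <= k)%N -> exists2 g, (msize g <= k)%N & radial_div g = h.
Proof.
move=> ontoX h hk; rewrite (mpolyE h) big_seq.
apply: (big_ind (fun p => exists2 g, (msize g <= k)%N & radial_div g = p)).
- by exists 0; rewrite ?msize0 ?radial_div0.
- move=> _ _ [g1 g1k <-] [g2 g2k <-]; exists (g1 + g2); last exact: radial_divD.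
  by apply: leq_trans (msizeD_le _ _) _; rewrite geq_max g1k g2k.
- move=> m mh; have [g gk Lg] := ontoX m (leq_trans (msize_mdeg_lt mh) hk).
  by exists (h@_m *: g); [exact: leq_trans (msizeZ_le _ _) gk | rewrite radial_divZ Lg].
Qed.

Hypothesis n_gt0 : (0 < n)%N.

Lemma radial_div_onto k h :
  (msize h <= k)%N -> exists2 g, (msize g <= k)%N & radial_div g = h.
Proof.
elim: k h => [|k IH] h hk.
  exists 0; first by rewrite msize0.
  have -> : h = 0 by apply/eqP; rewrite -msize_poly_eq0 -leqn0.
  by rewrite radial_div0.
apply: radial_div_onto_of_monomials hk => m mk.
set c : R := (n + mdeg m)%:R; have c_nz : c != 0 by rewrite pnatr_eq0 -lt0n addn_gt0 n_gt0.
set r := \sum_(i < n) V i *: ('X_[m] : P)^`M(i).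
have rk : (msize (c^-1 *: r) <= k)%N.
  apply: leq_trans (msizeZ_le _ _) _; apply: leq_trans (msize_sum _ _ _) _.
  apply/bigmax_leqP_seq => i _ _; apply: leq_trans (msizeZ_le _ _) _.
  by apply: leq_trans (msize_mderiv _ _) _; rewrite msizeX.
have [g gk Lg] := IH _ rk.
exists (c^-1 *: 'X_[m] + g).
  apply: leq_trans (msizeD_le _ _) _; rewrite geq_max (leqW gk) andbT.
  by apply: leq_trans (msizeZ_le _ _) _; rewrite msizeX.
by rewrite radial_divD radial_divZ radial_divX Lg -/c -/r scalerBr scalerA mulVf // scale1r subrK.
Qed.

End RadialDivergence.

Lemma meval_radial (R : numFieldType) n (V v : 'I_n -> R) (g : {mpoly R[n]}) i :
  (radial V g i).@[v] = (v i - V i) * g.@[v].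
Proof. by rewrite mevalM mevalB mevalXU mevalC. Qed.

Lemma cross_addZ_self (R : realType) (u a : 'rV[R]_3) (s : R) :
  cross u (a + s *: u) = cross u a.
Proof. by apply/rowP => i; rewrite !mxE; case: ifP => _; [|case: ifP => _]; ring. Qed.

Lemma koszul_add_radial (R : realType) (V x : 'rV[R]_3) (q : 'I_3 -> poly3 R) g :
  koszul V (vpeval (fun i => q i + radial (fun j => V ord0 j) g i)) x = koszul V (vpeval q) x.
Proof.
rewrite /koszul -[RHS](cross_addZ_self _ _ (peval g x)); congr cross.
by apply/rowP => i; rewrite !mxE /peval mevalD meval_radial mulrC.
Qed.

From mathcomp Require Import all_classical all_reals all_analysis.
Import numFieldNormedType.Exports.
Local Open Scope classical_set_scope.

Theorem theorem7p1 (R : realType) (Omega : set 'rV[R]_3) (V : 'rV[R]_3) (k : nat) :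
  open Omega -> Omega !=set0 -> Omega V ->
  forall f : 'rV[R]_3 -> 'rV[R]_3,
    (exists q1 : 'I_3 -> poly3 R,
        (forall i, deg_le k (q1 i)) /\
        (forall x, Omega x -> f x = koszul V (vpeval q1) x))
    <->
    (exists q2 : 'I_3 -> poly3 R,
        (forall i, deg_le k (q2 i)) /\
        (forall x, Omega x -> peval (polydiv3 q2) x = 0) /\
        (forall x, Omega x -> f x = koszul V (vpeval q2) x)).
Proof.
move=> _ _ _ f; split; last by case=> q2 [q2k [_ fq2]]; exists q2.
case=> q1 [q1k fq1]; pose Vc := fun j : 'I_3 => V ord0 j.
have div_k : (mpoly.msize (- mdiv q1) <= k)%N by rewrite mpoly.msizeN; apply: msize_mdiv.
have [g gk Lg] := radial_div_onto Vc (isT : (0 < 3)%N) div_k.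
exists (fun i => q1 i + radial Vc g i); split; [|split].
- move=> i; apply: leq_trans (mpoly.msizeD_le _ _) _.
  by rewrite geq_max [(_ <= k.+1)%N](q1k i) (leq_trans (msize_radial _ _ _)).
- by move=> x _; rewrite /polydiv3 -/(mdiv _) mdiv_add_radial Lg subrr /peval mpoly.meval0.
- by move=> x Ox; rewrite fq1 // koszul_add_radial.
Qed.
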